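(* For all integers $s\ge2$ and $m\ge s+1$, the tight cycle $C_m^{(s)}$ is edge-balanced.
   Context: The tight cycle $C_m^{(s)}$ is the $s$-uniform hypergraph with vertices $v_1,\dots,v_m$ in cyclic order and the $m$ edges $\{v_i,v_{i+1},\dots,v_{i+s-1}\}$, $i=1,\dots,m$, indices modulo $m$. For an $s$-graph $F$ with $v_F$ vertices and $e_F\ge1$ edges, $g(F)=1/s$ if $e_F=1$ and $g(F)=\frac{e_F-1}{v_F-s}$ if $e_F>1$. $F$ is edge-balanced if every sub-hypergraph $F'\subseteq F$ with $e_{F'}>0$ satisfies $g(F')\le g(F)$. *)

From mathcomp Require Import all_boot all_order all_algebra.
Set Implicit Arguments. Unset Strict Implicit. Unset Printing Implicit Defensive.
Import Order.TTheory GRing.Theory Num.Theory.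

(* An s-graph (s-uniform hypergraph) is given by a vertex set V and an edge set E,
   both over a finite ground type T; edges are sets of size s. *)

Definition gdens (T : finType) (s : nat) (V : {set T}) (E : {set {set T}}) : rat :=
  if #|E| == 1%N then ((s%:R)^-1)%R
  else ((#|E|%:R - 1) / (#|V|%:R - s%:R))%R.

Definition subhypergraph (T : finType) (V' : {set T}) (E' : {set {set T}})
  (V : {set T}) (E : {set {set T}}) : Prop :=
  [/\ V' \subset V, E' \subset E & forall e, e \in E' -> e \subset V'].

Definition edge_balanced (T : finType) (s : nat) (V : {set T}) (E : {set {set T}}) : Prop :=
  forall (V' : {set T}) (E' : {set {set T}}),
    subhypergraph V' E' V E -> (0 < #|E'|)%N -> (gdens s V' E' <= gdens s V E)%R.

(* Tight cycle C_m^(s) on vertices 'I_m (v_1,...,v_m = 0,...,m-1 in cyclic order):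
   edge i is {i, i+1, ..., i+s-1} (mod m). *)
Definition tight_edge (m s : nat) (i : 'I_m) : {set 'I_m} :=
  [set j : 'I_m | ((j + m - i) %% m < s)%N].

Definition tight_cycle_edges (m s : nat) : {set {set 'I_m}} :=
  [set tight_edge s i | i : 'I_m].

From mathcomp Require Import all_boot all_order all_algebra.
From mathcomp Require Import zify.
Import Order.TTheory GRing.Theory Num.Theory.

Set Implicit Arguments.
Unset Strict Implicit.
Unset Printing Implicit Defensive.

(* The m edges of C = C_m^(s) are pairwise distinct, so g(C) = (m - 1)/(m - s) >= 1.
   A sub-hypergraph F' spanning all m vertices has at most m edges, hence g(F') <= g(C).
   If F' misses a vertex, then v_F' >= e_F' + s - 1 (the starting vertices of its edges
   plus s - 1 more), hence g(F') <= 1 <= g(C). *)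

Section CyclicDistance.

Variable m : nat.
Implicit Types i j k : 'I_m.

(* Forward (non-symmetric) distance from [i] to [j] along the cycle. *)
Definition cdist i j : nat := (j + m - i) %% m.

Lemma cdistE i j : cdist i j = if i <= j then j - i else j + m - i.
Proof.
rewrite /cdist; have := ltn_ord i; have := ltn_ord j; case: (leqP i j) => ij jm im.
  have -> : j + m - i = j - i + m by lia.
  by rewrite modnDr modn_small //; lia.
by rewrite modn_small //; lia.
Qed.

Lemma cdist_lt i j : cdist i j < m.
Proof. by rewrite cdistE; have := ltn_ord i; have := ltn_ord j; case: (leqP i j); lia. Qed.

Lemma cdist_eq0 i j : (cdist i j == 0) = (i == j).
Proof.
rewrite cdistE -val_eqE /=; have := ltn_ord i; have := ltn_ord j.
by case: (leqP i j) => ij jm im; apply/eqP/eqP; lia.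
Qed.

Lemma cdistxx i : cdist i i = 0.
Proof. by apply/eqP; rewrite cdist_eq0. Qed.

Lemma cdist_sym i j : i != j -> cdist i j + cdist j i = m.
Proof.
rewrite -cdist_eq0 !cdistE; have := ltn_ord i; have := ltn_ord j.
by case: (leqP i j); case: (leqP j i); lia.
Qed.

Lemma cdist_split i j k : cdist i j <= cdist i k -> cdist i k = cdist i j + cdist j k.
Proof.
rewrite !cdistE; have := ltn_ord i; have := ltn_ord j; have := ltn_ord k.
by case: (leqP i j); case: (leqP i k); case: (leqP j k); lia.
Qed.

Hypothesis m_gt0 : 0 < m.

Definition cshift i (n : nat) : 'I_m := Ordinal (ltn_pmod (i + n) m_gt0).

Lemma cdist_cshift i n : n < m -> cdist i (cshift i n) = n.
Proof.
move=> nm; rewrite cdistE /=; have := ltn_ord i.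
case: (ltnP (i + n) m) => [inm | min] im.
  by rewrite modn_small //; case: leqP; lia.
have -> : i + n = i + n - m + m by lia.
by rewrite modnDr modn_small; case: leqP; lia.
Qed.

End CyclicDistance.

Lemma mem_tight_edge m s (i j : 'I_m) : (j \in tight_edge s i) = (cdist i j < s).
Proof. by rewrite inE. Qed.

Lemma tight_edge_inj m s : 0 < s < m -> injective (tight_edge s : 'I_m -> {set 'I_m}).
Proof.
case/andP=> s_gt0 sm i i' edge_ii'; have m_gt0 : 0 < m by lia.
have : cdist i' i < s by rewrite -mem_tight_edge -edge_ii' mem_tight_edge cdistxx.
case d_i'i : (cdist i' i) => [|t] t_lt.
  by apply/eqP; rewrite eq_sym -cdist_eq0 d_i'i.
(* The predecessor [p] of [i] lies in the edge started at [i'], but is the last vertex of the cycle seen from [i]. *)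
pose p := cshift m_gt0 i' t.
have d_i'p : cdist i' p = t by rewrite cdist_cshift //; lia.
have d_pi : cdist p i = 1.
  by have := @cdist_split _ i' p i; rewrite d_i'p d_i'i; lia.
have pi : p != i by rewrite -cdist_eq0 d_pi.
have : p \in tight_edge s i by rewrite edge_ii' mem_tight_edge d_i'p; lia.
by rewrite mem_tight_edge; have := cdist_sym pi; rewrite d_pi; lia.
Qed.

Lemma card_tight_cycle_edges m s : 0 < s < m -> #|tight_cycle_edges m s| = m.
Proof. by move=> sm; rewrite card_imset ?card_ord //; exact: tight_edge_inj. Qed.

Lemma leq_card_tight_starts m s (E : {set {set 'I_m}}) :
  E \subset tight_cycle_edges m s -> #|E| <= #|[set i | tight_edge s i \in E]|.
Proof.
move=> EC; apply: leq_trans (leq_imset_card (tight_edge s) _).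
apply: subset_leq_card; apply/subsetP => e eE.
have /imsetP [i _ e_i] : e \in tight_cycle_edges m s := subsetP EC e eE.
by rewrite e_i imset_f // inE -e_i.
Qed.

(* Take the start [b] in [S] closest to a missing vertex [a] going forward: the [s - 1]
   vertices following [b] belong to the edge of [b], and none of them starts an edge of [S],
   since it would be even closer to [a]. *)
Lemma leq_card_tight_span m s (S V : {set 'I_m}) (a : 'I_m) :
    0 < s -> S != set0 -> {in S, forall i, tight_edge s i \subset V} -> a \notin V ->
  #|S| + s.-1 <= #|V|.
Proof.
move=> s_gt0 /set0Pn [b0 b0S] cover aV.
have m_gt0 : 0 < m by have := ltn_ord a; lia.
case: (arg_minnP (fun x => cdist x a) b0S) => b bS b_min.
have s_le_ba : s <= cdist b a.
  by rewrite leqNgt -mem_tight_edge; exact: contra (subsetP (cover b bS) a) aV.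
have ba_lt := cdist_lt b a.
pose c (k : 'I_s.-1) := cshift m_gt0 b k.+1.
have d_bc k : cdist b (c k) = k.+1 by rewrite cdist_cshift //; have := ltn_ord k; lia.
have c_inj : injective c.
  by move=> k k' /(congr1 (cdist b)); rewrite !d_bc => -[] /val_inj.
have cV k : c k \in V.
  by apply: subsetP (cover b bS) _ _; rewrite mem_tight_edge d_bc; have := ltn_ord k; lia.
have cS k : c k \notin S.
  apply/negP => /b_min; have := @cdist_split _ b (c k) a.
  by rewrite d_bc; have := ltn_ord k; lia.
set C := [set c k | k : 'I_s.-1].
have SC : S :&: C = set0.
  apply/setP => x; rewrite inE in_set0; apply/negbTE/andP => -[xS /imsetP [k _ xk]].
  by move: xS; rewrite xk (negbTE (cS k)).
have SCV : S :|: C \subset V.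
  apply/subsetP => x /setUP [xS | /imsetP [k _ ->]]; last exact: cV.
  by apply: subsetP (cover x xS) _ _; rewrite mem_tight_edge cdistxx.
have := subset_leq_card SCV; have := cardsUI S C.
by rewrite SC cards0 addn0 card_imset // card_ord => <-.
Qed.

Section Density.

Variables (T : finType) (s : nat).
Implicit Types (V : {set T}) (E : {set {set T}}).

Lemma gdensE V E : #|E| != 1 -> 0 < #|E| -> s <= #|V| ->
  gdens s V E = (#|E|.-1%:R / (#|V| - s)%:R)%R.
Proof.
by move=> /negbTE E_neq1 E_gt0 sV; rewrite /gdens E_neq1 natrB // -subn1 natrB.
Qed.

Lemma gdens_le1 V E : 0 < s -> 0 < #|E| -> #|E| + s.-1 <= #|V| -> (gdens s V E <= 1)%R.
Proof.
move=> s_gt0 E_gt0 EV; case: (eqVneq #|E| 1) => [E1 | E_neq1].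
  by rewrite /gdens E1 eqxx invf_le1 ?ler1n ?ltr0n.
rewrite gdensE //; last by lia.
by rewrite ler_pdivrMr ?ltr0n ?subn_gt0 ?mul1r ?ler_nat; lia.
Qed.

Lemma gdens_ge1 V E :
  0 < s -> s < #|V| -> 1 < #|E| -> #|V| <= #|E| + s.-1 -> (1 <= gdens s V E)%R.
Proof.
move=> s_gt0 sV E_gt1 VE; rewrite gdensE; try lia.
by rewrite ler_pdivlMr ?ltr0n ?subn_gt0 // mul1r ler_nat; lia.
Qed.

Lemma gdens_mono_edges V' E' V E :
    #|V'| = #|V| -> s < #|V| -> 1 < #|E'| -> #|E'| <= #|E| ->
  (gdens s V' E' <= gdens s V E)%R.
Proof.
move=> V'V sV E'_gt1 E'E; rewrite !gdensE; try lia.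
by rewrite V'V ler_pM2r ?invr_gt0 ?ltr0n ?subn_gt0 // ler_nat; lia.
Qed.

End Density.

Theorem claim21 (s m : nat) :
  (2 <= s)%N -> (s.+1 <= m)%N ->
  edge_balanced s [set: 'I_m] (tight_cycle_edges m s).
Proof.
move=> s_ge2 sm V E [_ EC EV] E_gt0.
have cardT : #|[set: 'I_m]| = m by rewrite cardsT card_ord.
have cardC : #|tight_cycle_edges m s| = m by apply: card_tight_cycle_edges; lia.
have gC_ge1 : (1 <= gdens s [set: 'I_m] (tight_cycle_edges m s))%R.
  by apply: gdens_ge1; rewrite ?cardT ?cardC; lia.
have EC_card := subset_leq_card EC.
set S := [set i | tight_edge s i \in E].
have ES : #|E| <= #|S| := leq_card_tight_starts EC.
have cover : {in S, forall i, tight_edge s i \subset V} by move=> i; rewrite inE; exact: EV.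
have [VT | /subsetPn [a _ aV]] := boolP ([set: 'I_m] \subset V).
  have -> : V = setT by apply/eqP; rewrite eqEsubset subsetT.
  have [E1 | E_neq1] := eqVneq #|E| 1.
    by apply: le_trans gC_ge1; apply: gdens_le1; rewrite ?cardT; lia.
  by apply: gdens_mono_edges; rewrite ?cardT ?cardC; lia.
apply: le_trans gC_ge1; apply: gdens_le1; try lia.
have S_neq0 : S != set0 by rewrite -card_gt0; lia.
apply: leq_trans (leq_card_tight_span (ltnW s_ge2) S_neq0 cover aV).
by rewrite leq_add2r.
Qed.
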